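(* Let $R_1,R_2$ be commutative multiplicative hyperrings with identity having the zero absorbing property, and let $f:R_1\to R_2$ be a good homomorphism. Let $I_1,I_2$ be hyperideals of $R_1,R_2$ respectively. Let $\alpha_1$ be a good endomorphism of $R_1$ and $\alpha_2$ a good endomorphism of $R_2$ with $\alpha_2(f(r))=f(\alpha_1(r))$ for all $r\in R_1$. Then: (1) $f\big(\sqrt[\alpha_1]{I_1}\big)\subseteq\sqrt[\alpha_2]{f(I_1)}$; (2) $\sqrt[\alpha_1]{f^{-1}(I_2)}\subseteq f^{-1}\big(\sqrt[\alpha_2]{I_2}\big)$; (3) if $f$ is an isomorphism, then $f\big(\sqrt[\alpha_1]{I_1}\big)=\sqrt[\alpha_2]{f(I_1)}$.
   Context: A multiplicative hyperring is an abelian group $(R,+)$ with a hyperoperation $\circ:R\times R\to \mathcal P^*(R)$ (nonempty subsets) such that $a\circ(b\circ c)=(a\circ b)\circ c$, $a\circ(b+c)\subseteq a\circ b+a\circ c$, $(b+c)\circ a\subseteq b\circ a+c\circ a$, and $a\circ(-b)=(-a)\circ b=-(a\circ b)$. Products of subsets are unions of elementwise products, and $x^n=x\circ\cdots\circ x$ ($n$ factors). Commutative means $a\circ b=b\circ a$. An identity $1$ satisfies $a\in1\circ a$ for all $a$. $R$ has the zero absorbing property if $0\circ r=r\circ0=\{0\}$ for all $r$. A hyperideal is a nonempty $I$ closed under subtraction with $r\circ x\subseteq I$ for $r\in R$, $x\in I$. Standing assumption: all hyperideals are $\mathbf C$-hyperideals, i.e. for every finite product $A=r_1\circ\cdots\circ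 r_n$, $A\cap I\ne\emptyset$ implies $A\subseteq I$. A good homomorphism $f$ satisfies $f(x+y)=f(x)+f(y)$ and $f(x\circ y)=f(x)\circ f(y)$; a good endomorphism is a good homomorphism $R\to R$; maps are applied to sets elementwise. For a good endomorphism $\alpha$ and subset $J$, the $\alpha$-radical is $\sqrt[\alpha]{J}=\{r:\alpha(r^n)\subseteq J\text{ for some }n\in\mathbb N\}$. *)

(* the additive group (R,+) is a MathComp zmodType;
   subsets are predicates R -> Prop; a hyperoperation is a ternary
   relation  m a b z  meaning  z \in a o b. *)
From mathcomp Require Import all_boot all_algebra.
Set Implicit Arguments.
Unset Strict Implicit.
Unset Printing Implicit Defensive.
Import GRing.Theory.
Local Open Scope ring_scope.

Definition hset (R : Type) := R -> Prop.
Definition hyperop (R : Type) := R -> R -> hset R.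

Definition hsubset (R : Type) (A B : hset R) : Prop := forall x, A x -> B x.
Definition hseteq (R : Type) (A B : hset R) : Prop := forall x, A x <-> B x.

Definition hprodS (R : Type) (m : hyperop R) (A B : hset R) : hset R :=
  fun z => exists a b, A a /\ B b /\ m a b z.
Definition hsumS (R : zmodType) (A B : hset R) : hset R :=
  fun z => exists a b, A a /\ B b /\ z = a + b.
Definition hoppS (R : zmodType) (A : hset R) : hset R :=
  fun z => exists a, A a /\ z = - a.
Definition hsing (R : Type) (a : R) : hset R := fun z => z = a.

Definition is_mhyperring (R : zmodType) (m : hyperop R) : Prop :=
  [/\ (forall a b, exists z, m a b z),
      (forall a b c, hseteq (hprodS m (hsing a) (m b c)) (hprodS m (m a b) (hsing c))),
      (forall a b c, hsubset (m a (b + c)) (hsumS (m a b) (m a c))),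
      (forall a b c, hsubset (m (b + c) a) (hsumS (m b a) (m c a))) &
      (forall a b, hseteq (m a (- b)) (hoppS (m a b)) /\
                   hseteq (m (- a) b) (hoppS (m a b)))].

Definition hcommutative (R : Type) (m : hyperop R) : Prop :=
  forall a b, hseteq (m a b) (m b a).

Definition has_identity (R : Type) (m : hyperop R) : Prop :=
  exists one : R, forall a, m one a a.

Definition zero_absorbing (R : zmodType) (m : hyperop R) : Prop :=
  forall r, hseteq (m 0 r) (hsing 0) /\ hseteq (m r 0) (hsing 0).

(* finite product r o r1 o ... o rk (left-bracketed; k+1 factors) *)
Fixpoint hprodL (R : Type) (m : hyperop R) (A : hset R) (rs : seq R) : hset R :=
  match rs with
  | [::] => A
  | r :: rs' => hprodL m (hprodS m A (hsing r)) rs'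
  end.
Definition hprod (R : Type) (m : hyperop R) (r : R) (rs : seq R) : hset R :=
  hprodL m (hsing r) rs.

(* x^n = x o ... o x (n factors), meaningful for n >= 1 *)
Definition hpow (R : Type) (m : hyperop R) (x : R) (n : nat) : hset R :=
  hprod m x (nseq n.-1 x).

(* C-hyperideal (standing assumption: all hyperideals are C-hyperideals) *)
Definition is_hyperideal (R : zmodType) (m : hyperop R) (I : hset R) : Prop :=
  [/\ (exists x, I x),
      (forall x y, I x -> I y -> I (x - y)),
      (forall r x, I x -> hsubset (m r x) I) &
      (forall r rs, (exists z, hprod m r rs z /\ I z) -> hsubset (hprod m r rs) I)].

Definition himage (R S : Type) (f : R -> S) (A : hset R) : hset S :=
  fun y => exists x, A x /\ y = f x.
Definition hpreimage (R S : Type) (f : R -> S) (B : hset S) : hset R :=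
  fun x => B (f x).

Definition good_hom (R S : zmodType) (m1 : hyperop R) (m2 : hyperop S)
  (f : R -> S) : Prop :=
  (forall x y, f (x + y) = f x + f y) /\
  (forall x y, hseteq (himage f (m1 x y)) (m2 (f x) (f y))).

Definition good_endo (R : zmodType) (m : hyperop R) (al : R -> R) : Prop :=
  good_hom m m al.

Definition alpha_radical (R : Type) (m : hyperop R) (al : R -> R) (J : hset R)
  : hset R :=
  fun r => exists n : nat, (0 < n)%N /\ hsubset (himage al (hpow m r n)) J.

From mathcomp Require Import all_boot all_algebra.

(* Since (f x)^n = f(x^n) and alpha_2 o f = f o alpha_1, the condition
   "alpha_2((f x)^n) lies in J" says exactly that alpha_1(x^n) lies in f^{-1}(J):
   taking preimages commutes with alpha-radicals. All three claims follow
   from this and from I_1 being contained in (and, for injective f, equal to)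
   f^{-1}(f(I_1)). *)

Set Implicit Arguments.
Unset Strict Implicit.
Unset Printing Implicit Defensive.

Lemma hprodL_mono (R : Type) (m : hyperop R) (A B : hset R) (rs : seq R) :
  hsubset A B -> hsubset (hprodL m A rs) (hprodL m B rs).
Proof.
elim: rs A B => [|r rs IH] A B sAB //=.
by apply: IH => z [a [b [Aa [Bb mz]]]]; exists a, b; auto.
Qed.

Lemma hprodL_eq (R : Type) (m : hyperop R) (A B : hset R) (rs : seq R) :
  hseteq A B -> hseteq (hprodL m A rs) (hprodL m B rs).
Proof.
by move=> eAB z; split; apply: hprodL_mono => x /eAB.
Qed.

Lemma himage_hsing (R S : Type) (f : R -> S) (x : R) :
  hseteq (himage f (hsing x)) (hsing (f x)).
Proof. by move=> y; split => [[_ [-> ->]] | ->] //; exists x. Qed.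

Section ImageOfProducts.

Variables (R1 R2 : Type) (m1 : hyperop R1) (m2 : hyperop R2) (f : R1 -> R2).
Hypothesis fM : forall x y, hseteq (himage f (m1 x y)) (m2 (f x) (f y)).

Lemma himage_hprodS_sing (A : hset R1) (r : R1) :
  hseteq (himage f (hprodS m1 A (hsing r))) (hprodS m2 (himage f A) (hsing (f r))).
Proof.
move=> z; split.
- move=> [v [[x [_ [Ax [-> mv]]]] ->]].
  by exists (f x), (f r); split; [exists x | split=> //; apply/fM; exists v].
- move=> [_ [_ [[x [Ax ->]] [-> mz]]]].
  have [v [mv ->]] : himage f (m1 x r) z by apply/fM.
  by exists v; split=> //; exists x, r.
Qed.

Lemma himage_hprodL (A : hset R1) (rs : seq R1) :
  hseteq (himage f (hprodL m1 A rs)) (hprodL m2 (himage f A) (map f rs)).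
Proof.
elim: rs A => [|r rs IH] A z //=.
apply: iff_trans (IH _ z) _.
exact: hprodL_eq (himage_hprodS_sing _ _) z.
Qed.

Lemma himage_hpow (x : R1) (n : nat) :
  hseteq (himage f (hpow m1 x n)) (hpow m2 (f x) n).
Proof.
move=> z; apply: iff_trans (himage_hprodL _ _ z) _.
by rewrite map_nseq; apply: hprodL_eq; apply: himage_hsing.
Qed.

End ImageOfProducts.

Lemma alpha_radical_mono (R : Type) (m : hyperop R) (al : R -> R) (J K : hset R) :
  hsubset J K -> hsubset (alpha_radical m al J) (alpha_radical m al K).
Proof.
by move=> sJK x [n [n0 sJ]]; exists n; split=> // y /sJ /sJK.
Qed.

Section RadicalsUnderHomomorphisms.

Variables (R1 R2 : Type) (m1 : hyperop R1) (m2 : hyperop R2) (f : R1 -> R2).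
Variables (al1 : R1 -> R1) (al2 : R2 -> R2).
Hypothesis fM : forall x y, hseteq (himage f (m1 x y)) (m2 (f x) (f y)).
Hypothesis al_f : forall r, al2 (f r) = f (al1 r).

Lemma hpreimage_alpha_radical (J : hset R2) :
  hseteq (hpreimage f (alpha_radical m2 al2 J))
         (alpha_radical m1 al1 (hpreimage f J)).
Proof.
move=> x; split=> -[n [n0 sJ]]; exists n; split=> //.
- move=> _ [v [xv ->]]; rewrite /hpreimage -al_f.
  by apply: sJ; exists (f v); split=> //; apply/(himage_hpow fM); exists v.
- move=> _ [_ [/(himage_hpow fM) [v [xv ->]] ->]]; rewrite al_f.
  by apply: sJ; exists v.
Qed.

Lemma himage_alpha_radical (I : hset R1) :
  hsubset (himage f (alpha_radical m1 al1 I))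
          (alpha_radical m2 al2 (himage f I)).
Proof.
move=> _ [x [radx ->]]; apply/hpreimage_alpha_radical.
by apply: alpha_radical_mono radx => y Iy; exists y.
Qed.

Lemma himage_alpha_radical_bij (I : hset R1) : bijective f ->
  hseteq (himage f (alpha_radical m1 al1 I))
         (alpha_radical m2 al2 (himage f I)).
Proof.
move=> f_bij y; split; first exact: himage_alpha_radical.
have [g fK gK] := f_bij; rewrite -[y]gK => rady.
exists (g y); split=> //.
have /hpreimage_alpha_radical := rady; apply: alpha_radical_mono.
by move=> x [z [Iz /(bij_inj f_bij) ->]].
Qed.

End RadicalsUnderHomomorphisms.

Theorem mainTheorem15
  (R1 R2 : zmodType) (m1 : hyperop R1) (m2 : hyperop R2)
  (hR1 : is_mhyperring m1) (cR1 : hcommutative m1) (iR1 : has_identity m1)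
  (zR1 : zero_absorbing m1)
  (hR2 : is_mhyperring m2) (cR2 : hcommutative m2) (iR2 : has_identity m2)
  (zR2 : zero_absorbing m2)
  (f : R1 -> R2) (hf : good_hom m1 m2 f)
  (I1 : hset R1) (I2 : hset R2)
  (hI1 : is_hyperideal m1 I1) (hI2 : is_hyperideal m2 I2)
  (al1 : R1 -> R1) (al2 : R2 -> R2)
  (hal1 : good_endo m1 al1) (hal2 : good_endo m2 al2)
  (hcomm : forall r, al2 (f r) = f (al1 r)) :
  [/\ hsubset (himage f (alpha_radical m1 al1 I1))
              (alpha_radical m2 al2 (himage f I1)),
      hsubset (alpha_radical m1 al1 (hpreimage f I2))
              (hpreimage f (alpha_radical m2 al2 I2)) &
      (bijective f ->
         hseteq (himage f (alpha_radical m1 al1 I1))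
                (alpha_radical m2 al2 (himage f I1)))].
Proof.
have [_ fM] := hf.
split.
- exact: himage_alpha_radical fM hcomm I1.
- by move=> x /(hpreimage_alpha_radical fM hcomm).
- exact: himage_alpha_radical_bij fM hcomm I1.
Qed.
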